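(* Let $H=([n],E)$ be a hypergraph and $H'=([n],E')$ with $E'\subseteq E$. Let $H^*=([n],E^* )$ be any hypergraph such that for every edge $F\in E$ there exists $F^*\in E^*$ with $F^*\subseteq F$. Then for all $0\le i\le n$, \[0\le f_i(\chi_{H^*}(k))\le f_i(\chi_H(k))\le f_i(\chi_{H'}(k)).\]
   Context: Hypergraphs $([n],E)$ have edges that are nonempty subsets of $[n]$, with no edge of cardinality 1. A proper $k$-coloring is a map $[n]\to[k]$ such that no edge is monochromatic; $\chi_H(k)$ is the number of proper $k$-colorings, a polynomial in $k$ of degree at most $n$. For a polynomial $p(k)$ of degree at most $n$, its $f$-vector $(f_{-1},f_0,\dots,f_n)$ is defined by $p(k)=\sum_{i=0}^n f_i(p)\binom{k-1}{i}$ and $f_{-1}=1$. *)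

From mathcomp Require Import all_boot all_order all_algebra.
Set Implicit Arguments. Unset Strict Implicit. Unset Printing Implicit Defensive.
Import GRing.Theory Num.Theory.

Definition is_hypergraph (n : nat) (E : {set {set 'I_n}}) : Prop :=
  forall F, F \in E -> 1 < #|F|.

Definition proper_coloring (n k : nat) (E : {set {set 'I_n}})
  (c : {ffun 'I_n -> 'I_k}) : bool :=
  [forall F in E, exists x in F, exists y in F, c x != c y].

Definition chi (n : nat) (E : {set {set 'I_n}}) (k : nat) : nat :=
  #|[set c : {ffun 'I_n -> 'I_k} | proper_coloring E c]|.

(* f is the f-vector (f_0,...,f_n) of the polynomial p of degree <= n, i.e.
   p(k) = \sum_{i=0}^n f_i binom(k-1, i) as polynomials in k.  Since both sides
   are polynomials, it is equivalent to require this for all integers k >= 1;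
   we write k+1 for k, so binom(k-1,i) becomes 'C(k,i). *)
Definition is_fvector (n : nat) (p : nat -> int) (f : nat -> int) : Prop :=
  forall k : nat, p k.+1 = (\sum_(i < n.+1) f i * ('C(k, i))%:Z)%R.

From mathcomp Require Import all_boot all_order all_algebra.
Set Implicit Arguments. Unset Strict Implicit. Unset Printing Implicit Defensive.
Import GRing.Theory Num.Theory.

(* Colour with the colours [0..k] and group the proper colourings by the set [S]
   of nonzero colours they use: relabelling shows that the number of colourings
   using exactly [S] depends only on [j = #|S|], so [chi_H(k+1)] is the sum over
   [j] of [C(k, j)] times the number [c_j] of proper colourings with colours
   [0..j] using all of [1..j].  By unitriangularity the f-vector is unique, so
   [f_j = c_j >= 0].  A proper colouring of [H*] is proper for [H], and one of [H]
   is proper for [H'], hence [c_j] can only grow from [H*] to [H] to [H']. *)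

Lemma proper_coloringP n k (E : {set {set 'I_n}}) (c : {ffun 'I_n -> 'I_k}) :
  reflect (forall F, F \in E -> exists x y, [/\ x \in F, y \in F & c x != c y])
          (proper_coloring E c).
Proof.
apply: (iffP forall_inP) => pc F /pc.
- by case/exists_inP => x xF /exists_inP[y yF cxy]; exists x, y.
- case=> x [y [xF yF cxy]]; apply/exists_inP; exists x => //.
  by apply/exists_inP; exists y.
Qed.

Lemma exists_relabel (T1 T2 : finType) (a : T1) (b : T2)
    (A : {set T1}) (B : {set T2}) :
  a \notin A -> b \notin B -> #|A| = #|B| ->
  exists t : T1 -> T2, [/\ t a = b, {in a |: A &, injective t} & t @: A = B].
Proof.
move=> aA bB AB.
pose t x := if x \in A then nth b (enum B) (index x (enum A)) else b.
have ta : t a = b by rewrite /t (negbTE aA).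
have tB x : x \in A -> t x \in B.
  move=> xA; rewrite /t xA -mem_enum mem_nth //.
  by rewrite -cardE -AB cardE index_mem mem_enum.
have t_inj : {in A &, injective t}.
  move=> x y xA yA; rewrite /t xA yA => /eqP.
  rewrite nth_uniq ?enum_uniq // -?cardE -?AB ?cardE ?index_mem ?mem_enum //.
  by move/eqP/index_inj; apply; rewrite ?mem_enum.
exists t; split=> //.
- move=> x y /setU1P[-> | xA] /setU1P[-> | yA] //; last exact: t_inj.
  + by move=> e; case/negP: bB; rewrite -ta e tB.
  + by move=> e; case/negP: bB; rewrite -ta -e tB.
apply/eqP; rewrite eqEcard card_in_imset // AB leqnn andbT.
by apply/subsetP => _ /imsetP[x xA ->]; apply: tB.
Qed.

Lemma sum_powerset_card (T : finType) (A : {set T}) (g : nat -> nat) :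
  \sum_(S in powerset A) g #|S| = \sum_(j < #|A|.+1) g j * 'C(#|A|, j).
Proof.
have cardS S : S \in powerset A -> #|S| < #|A|.+1.
  by rewrite powersetE ltnS => /subset_leq_card.
rewrite (partition_big (fun S : {set T} => inord #|S| : 'I_#|A|.+1) predT) //=.
apply: eq_bigr => j _.
rewrite -cards_draws mulnC -sum_nat_const; apply: eq_big => [S | S].
  rewrite inE -powersetE; case: (boolP (S \in powerset A)) => //= SA.
  by rewrite -val_eqE /= inordK ?cardS.
by case/andP=> SA /eqP <-; rewrite inordK ?cardS.
Qed.

Lemma big_ord_widen_vanish (F : nat -> nat) m N :
  m <= N -> (forall j, m <= j < N -> F j = 0) ->
  \sum_(j < N) F j = \sum_(j < m) F j.
Proof.
move=> leMN F0; rewrite -!(big_mkord xpredT) (big_cat_nat (leq0n m) leMN) /=.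
rewrite [X in _ + X]big1_seq ?addn0 // => j /andP[_].
by rewrite mem_index_iota; apply: F0.
Qed.

(* Taking [k = i], the binomials [C(i, j)] vanish for [j > i] and [C(i, i) = 1],
   so the system defining an f-vector is unitriangular. *)
Lemma fvector_unique n (p f g : nat -> int) :
  is_fvector n p f -> is_fvector n p g -> forall i, i <= n -> f i = g i.
Proof.
move=> fP gP; elim/ltn_ind => i IH lein.
have /eqP := fP i; rewrite gP -subr_eq0 -sumrB.
rewrite (bigD1 (Ordinal (lein : i < n.+1))) //=.
rewrite big1 ?addr0 ?binn ?mulr1 ?subr_eq0 => [/eqP // | j ji].
rewrite -mulrBl; case: (ltngtP j i) => [lt_ji | lt_ij | eq_ji].
- by rewrite IH ?subrr ?mul0r // (leq_trans (ltnW lt_ji)).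
- by rewrite bin_small // mulr0.
- by move: ji; rewrite -val_eqE /= eq_ji eqxx.
Qed.

Section Colorings.

Variable n : nat.
Implicit Types (E Es : {set {set 'I_n}}) (m k j : nat).

Lemma proper_coloring_refine m E Es (c : {ffun 'I_n -> 'I_m}) :
  (forall F, F \in E -> exists2 Fs, Fs \in Es & Fs \subset F) ->
  proper_coloring Es c -> proper_coloring E c.
Proof.
move=> refE /proper_coloringP pc; apply/proper_coloringP => F /refE[Fs /pc].
by move=> [x [y [xFs yFs cxy]]] /subsetP sF; exists x, y; rewrite !sF.
Qed.

Lemma proper_coloring_comp m1 m2 E (t : 'I_m1 -> 'I_m2)
    (c : {ffun 'I_n -> 'I_m1}) :
  {in codom c &, injective t} ->
  proper_coloring E c -> proper_coloring E [ffun v => t (c v)].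
Proof.
move=> t_inj /proper_coloringP pc; apply/proper_coloringP => F /pc.
case=> x [y [xF yF cxy]]; exists x, y; split=> //; rewrite !ffunE.
by apply: contra_neq cxy; apply: t_inj; rewrite codom_f.
Qed.

Definition nz_colors m (c : {ffun 'I_n -> 'I_m.+1}) : {set 'I_m.+1} :=
  [set c v | v : 'I_n] :\ ord0.

Definition colorings_with E m (S : {set 'I_m.+1}) :=
  [set c : {ffun 'I_n -> 'I_m.+1} | proper_coloring E c & nz_colors c == S].

Definition chi_coef E j := #|colorings_with E [set~ @ord0 j]|.

Lemma card_nz_colors m (c : {ffun 'I_n -> 'I_m.+1}) : #|nz_colors c| <= n.
Proof.
rewrite (leq_trans (subset_leq_card (subsetDl _ _))) //.
by rewrite (leq_trans (leq_imset_card _ _)) ?card_ord.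
Qed.

Lemma nz_colors_comp m1 m2 (t : 'I_m1.+1 -> 'I_m2.+1)
    (c : {ffun 'I_n -> 'I_m1.+1}) :
  t ord0 = ord0 -> {in nz_colors c, forall x, t x != ord0} ->
  nz_colors [ffun v => t (c v)] = t @: nz_colors c.
Proof.
move=> t0 tnz; apply/setP => y; apply/setD1P/imsetP.
- case=> y0 /imsetP[v _ yv]; exists (c v); last by rewrite yv ffunE.
  rewrite in_setD1 imset_f // andbT.
  by apply: contra_neq y0 => cv0; rewrite yv ffunE cv0.
- case=> x /setD1P[x0 /imsetP[v _ xv]] ->; rewrite xv in x0 *.
  split; first by apply: tnz; rewrite in_setD1 x0 imset_f.
  by apply/imsetP; exists v; rewrite ?ffunE.
Qed.

Lemma card_colorings_with_relabel E m1 m2 (S1 : {set 'I_m1.+1})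
    (S2 : {set 'I_m2.+1}) (t : 'I_m1.+1 -> 'I_m2.+1) :
  t ord0 = ord0 -> {in ord0 |: S1 &, injective t} -> t @: S1 = S2 ->
  #|colorings_with E S1| <= #|colorings_with E S2|.
Proof.
move=> t0 t_inj tS1.
pose relabel (c : {ffun 'I_n -> 'I_m1.+1}) := [ffun v => t (c v)].
have codomS1 c : c \in colorings_with E S1 -> {subset codom c <= ord0 |: S1}.
  rewrite inE => /andP[_ /eqP <-] _ /codomP[v ->].
  by rewrite in_setU1 in_setD1 imset_f // andbT orbN.
rewrite -(card_in_imset (f := relabel)); last first.
  move=> c1 c2 /codomS1 s1 /codomS1 s2 /ffunP e; apply/ffunP => v.
  move: (e v); rewrite !ffunE; apply: (t_inj (c1 v) (c2 v)).
  - by apply: s1; rewrite codom_f.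
  - by apply: s2; rewrite codom_f.
apply: subset_leq_card; apply/subsetP => _ /imsetP[c cS1 ->].
move: (cS1); rewrite inE => /andP[pc /eqP ncS1].
rewrite inE proper_coloring_comp //=; last first.
  by move=> x y /(codomS1 c cS1) xS /(codomS1 c cS1) yS; exact: t_inj.
rewrite nz_colors_comp // ncS1 ?tS1 // => x xS1.
have x0 : x != ord0 by move: xS1; rewrite -ncS1 => /setD1P[].
by rewrite -t0; apply: contra_neq x0; apply: t_inj; rewrite ?setU11 ?setU1r.
Qed.

Lemma card_colorings_with E m (S : {set 'I_m.+1}) :
  ord0 \notin S -> #|colorings_with E S| = chi_coef E #|S|.
Proof.
move=> S0; have S'0 : @ord0 #|S| \notin [set~ ord0] by rewrite !inE eqxx.
have cS : #|S| = #|[set~ @ord0 #|S|]| by rewrite cardsC1 card_ord.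
apply/anti_leq/andP; split.
- have [t [t0 t_inj tS]] := exists_relabel S0 S'0 cS.
  exact: card_colorings_with_relabel t0 t_inj tS.
- have [t [t0 t_inj tS]] := exists_relabel S'0 S0 (esym cS).
  exact: card_colorings_with_relabel t0 t_inj tS.
Qed.

Lemma chi_coef_eq0 E j : n < j -> chi_coef E j = 0.
Proof.
move=> nj; apply/eqP; rewrite cards_eq0; apply/set0Pn => -[c].
rewrite inE => /andP[_ /eqP nc]; have := card_nz_colors c.
by rewrite nc cardsC1 card_ord leqNgt nj.
Qed.

Lemma chi_binomial E k : chi E k.+1 = \sum_(j < k.+1) chi_coef E j * 'C(k, j).
Proof.
have nz_sub c : nz_colors c \in powerset [set~ @ord0 k].
  by rewrite powersetE; apply/subsetP => x; rewrite !inE => /andP[].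
rewrite /chi -sum1_card (partition_big _ _ (fun c _ => nz_sub c)) /=.
transitivity (\sum_(S in powerset [set~ @ord0 k]) chi_coef E #|S|).
  apply: eq_bigr => S SA; have S0 : ord0 \notin S.
    have /subsetP sS : S \subset [set~ ord0] by rewrite -powersetE.
    by apply/negP => /sS; rewrite !inE eqxx.
  rewrite -card_colorings_with //.
  by rewrite -sum1_card; apply: eq_bigl => c; rewrite !inE.
by rewrite sum_powerset_card cardsC1 card_ord.
Qed.

Lemma chi_binomial_trunc E k :
  chi E k.+1 = \sum_(j < n.+1) chi_coef E j * 'C(k, j).
Proof.
pose F j := chi_coef E j * 'C(k, j).
have vanish j : n < j \/ k < j -> F j = 0.
  by rewrite /F; case=> [/chi_coef_eq0 -> | /bin_small ->]; rewrite ?muln0.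
rewrite chi_binomial -(@big_ord_widen_vanish F _ _ (leq_addr n k.+1)); last first.
  by move=> j /andP[kj _]; apply: vanish; right.
rewrite -(@big_ord_widen_vanish F _ _ (leq_addl k n.+1)) ?addSn ?addnS //.
by move=> j /andP[nj _]; apply: vanish; left.
Qed.

Lemma chi_coef_refine E Es j :
  (forall F, F \in E -> exists2 Fs, Fs \in Es & Fs \subset F) ->
  chi_coef Es j <= chi_coef E j.
Proof.
move=> refE; apply: subset_leq_card; apply/subsetP => c; rewrite !inE.
by case/andP=> /(proper_coloring_refine refE) -> ->.
Qed.

Local Open Scope ring_scope.

Lemma chi_fvector E :
  is_fvector n (fun k => (chi E k)%:Z) (fun j => (chi_coef E j)%:Z).
Proof.
move=> k; rewrite chi_binomial_trunc -natz natr_sum.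
by apply: eq_bigr => j _; rewrite natrM !natz.
Qed.

End Colorings.

Local Open Scope ring_scope.

Theorem mainTheorem7 (n : nat) (E E' Es : {set {set 'I_n}})
  (f f' fs : nat -> int) :
  is_hypergraph E -> is_hypergraph Es -> (E' \subset E)%N ->
  (forall F, F \in E -> exists2 Fs, Fs \in Es & (Fs \subset F)%N) ->
  is_fvector n (fun k => (chi E k)%:Z) f ->
  is_fvector n (fun k => (chi E' k)%:Z) f' ->
  is_fvector n (fun k => (chi Es k)%:Z) fs ->
  forall i : nat, (i <= n)%N ->
    0 <= fs i /\ fs i <= f i /\ f i <= f' i.
Proof.
move=> _ _ sE'E refE fE fE' fEs i lein.
rewrite (fvector_unique fE (chi_fvector E) lein).
rewrite (fvector_unique fE' (chi_fvector E') lein).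
rewrite (fvector_unique fEs (chi_fvector Es) lein) !lez_nat.
split=> //; split; apply: chi_coef_refine => // F FE'.
by exists F; rewrite ?(subsetP sE'E).
Qed.
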